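(* Let $\phi(z)\in\mathbb{R}[z]$ be a cubic polynomial with positive lead coefficient. If $\phi$ has precisely one real fixed point $\gamma\in\mathbb{R}$, then $\mathfrak{K}_\infty\cap\mathbb{R}=\{\gamma\}$.
   Context: The (archimedean) filled Julia set of $\phi$ is $\mathfrak{K}_\infty=\{x\in\mathbb{C}:\{|\phi^n(x)|:n\ge0\}\text{ is bounded}\}$, where $\phi^n$ is the $n$-th iterate of $\phi$. *)

From HB Require Import structures.
From mathcomp Require Import all_boot all_order all_algebra.
From mathcomp Require Import reals.
From mathcomp.real_closed Require Import complex.
Set Implicit Arguments.
Unset Strict Implicit.
Unset Printing Implicit Defensive.
Import Order.TTheory GRing.Theory Num.Theory.
Local Open Scope ring_scope.
Local Open Scope complex_scope.

Definition filled_julia_inf (R : realType) (phi : {poly R}) (x : R[i]) : Prop :=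
  exists M : R, forall n : nat,
    `| iter n (fun z => (map_poly (real_complex R) phi).[z]) x | <= M%:C.

From HB Require Import structures.
From mathcomp Require Import all_boot all_order all_algebra.
From mathcomp Require Import reals.
From mathcomp.real_closed Require Import complex.
From mathcomp Require Import ring lra.
Import Order.TTheory GRing.Theory Num.Theory.
Local Open Scope ring_scope.
Local Open Scope complex_scope.

(* Idea: centred at the fixed point, phi(gamma + t) = gamma + t + t q(t) with q
   a quadratic of positive leading coefficient.  Uniqueness of the fixed point
   means q has no root t <> 0, so q is bounded below by a positive constant on
   each half-line {t : |t| >= |t0|, t t0 > 0}.  An orbit starting at
   gamma + t0 then moves away from gamma by at least a fixed amount at every
   step, hence is unbounded. *)

Section QuadraticWithoutNonzeroRoot.
Variable R : rcfType.
Variables a b c : R.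
Hypothesis a_gt0 : 0 < a.
Hypothesis quad_root0 : forall t, a * t ^+ 2 + b * t + c = 0 -> t = 0.

Let a_neq0 : a != 0. Proof. by rewrite gt_eqF. Qed.

Lemma quad_root_of_sqr t : (2 * a * t + b) ^+ 2 = b ^+ 2 - 4 * a * c -> t = 0.
Proof.
move=> ht; apply: quad_root0.
have : 4 * a * (a * t ^+ 2 + b * t + c) = 0.
  by rewrite -[RHS](subrr (b ^+ 2 - 4 * a * c)) -[X in _ = X - _]ht; ring.
by move/eqP; rewrite !mulf_eq0 (gt_eqF a_gt0) pnatr_eq0 /= => /eqP.
Qed.

Lemma quad_disc_le0 : b ^+ 2 - 4 * a * c <= 0.
Proof.
rewrite leNgt; apply/negP => disc_gt0.
pose s := Num.sqrt (b ^+ 2 - 4 * a * c).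
have s_gt0 : 0 < s by rewrite sqrtr_gt0.
have s2 : s ^+ 2 = b ^+ 2 - 4 * a * c by rewrite sqr_sqrtr ?ltW.
have r1 : (- b + s) / (2 * a) = 0.
  by apply: quad_root_of_sqr; rewrite -s2; congr (_ ^+ 2); field.
have r2 : (- b - s) / (2 * a) = 0.
  by apply: quad_root_of_sqr; rewrite -s2 -sqrrN; congr (_ ^+ 2); field.
have : (- b + s) / (2 * a) - (- b - s) / (2 * a) = s / a by field.
rewrite r1 r2 subrr => /esym/eqP.
by rewrite mulf_eq0 invr_eq0 (negPf a_neq0) (gt_eqF s_gt0).
Qed.

Lemma quad_disc0 : b ^+ 2 = 4 * a * c -> b = 0 /\ c = 0.
Proof.
move=> disc0.
have vertex0 : - b / (2 * a) = 0.
  apply: quad_root_of_sqr; rewrite disc0 subrr.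
  have -> : 2 * a * (- b / (2 * a)) + b = 0 by field.
  by rewrite expr0n.
have b0 : b = 0.
  have -> : b = - (2 * a) * (- b / (2 * a)) by field.
  by rewrite vertex0 mulr0.
split=> //; move: disc0; rewrite b0 expr0n /= => /esym/eqP.
by rewrite !mulf_eq0 (negPf a_neq0) pnatr_eq0 /= => /eqP.
Qed.

(* The witness is the minimum (4ac - b^2)/4a of q, unless it vanishes: then
   q = a t^2 and a t0^2 bounds it beyond t0. *)
Lemma quad_bounded_below_beyond (t0 : R) : t0 != 0 ->
  exists2 k, 0 < k & forall t : R, t0 ^+ 2 <= t0 * t -> k <= a * t ^+ 2 + b * t + c.
Proof.
move=> t0_neq0; have t02_gt0 : 0 < t0 ^+ 2 by rewrite exprn_even_gt0.
have := quad_disc_le0; rewrite le_eqVlt => /orP[/eqP disc0 | disc_lt0].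
- have [b0 c0] : b = 0 /\ c = 0 by apply: quad_disc0; lra.
  exists (a * t0 ^+ 2); first exact: mulr_gt0.
  move=> t tt0; rewrite b0 c0 mul0r !addr0 ler_pM2l //.
  have : t0 ^+ 2 * t0 ^+ 2 <= (t0 * t) * (t0 * t) by apply: ler_pM; rewrite ?sqr_ge0.
  by rewrite (_ : _ * _ * _ = t0 ^+ 2 * t ^+ 2) ?ler_pM2l //; ring.
- exists ((4 * a * c - b ^+ 2) / (4 * a)); first by rewrite divr_gt0 ?mulr_gt0 // subr_gt0 -subr_lt0.
  move=> t _; rewrite ler_pdivrMr ?mulr_gt0 //.
  have := sqr_ge0 (2 * a * t + b); nra.
Qed.

End QuadraticWithoutNonzeroRoot.

(* The hypothesis on y says that y lies on the far side of x as seen from c;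
   the pushes then accumulate, and they keep the orbit on that side. *)
Lemma iter_unbounded_of_uniform_push (R : archiRealFieldType) (f : R -> R) (c x m : R) :
  0 < m ->
  (forall y, (x - c) ^+ 2 <= (x - c) * (y - c) -> m <= (x - c) * (f y - y)) ->
  ~ exists M, forall n, `|iter n f x| <= M.
Proof.
move=> m_gt0 push [M orbit_le].
have push_n n : n%:R * m <= (x - c) * (iter n f x - x).
  elim: n => [|n IHn]; first by rewrite mul0r subrr mulr0.
  have beyond : (x - c) ^+ 2 <= (x - c) * (iter n f x - c).
    have := mulr_ge0 (ler0n R n) (ltW m_gt0); nra.
  have := push _ beyond; rewrite iterS -natr1; nra.
have bounded n : n%:R * m <= `|x - c| * (M + `|x|).
  apply: (le_trans (push_n n)); apply: (le_trans (ler_norm _)).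
  rewrite normrM ler_wpM2l //; apply: (le_trans (ler_normB _ _)).
  by rewrite lerD2r.
have K_ge0 : 0 <= `|x - c| * (M + `|x|) by apply: le_trans (bounded 0%N); rewrite mul0r.
have := archi_boundP (divr_ge0 K_ge0 (ltW m_gt0)).
by rewrite ltr_pdivrMr // => /lt_le_trans/(_ (bounded _)); rewrite ltxx.
Qed.

Lemma horner_cubic_centered (R : comNzRingType) (phi : {poly R}) (g y : R) :
  size phi = 4%N -> phi.[g] = g ->
  phi.[y] = y + (y - g) * (phi`_3 * (y - g) ^+ 2 + (3 * phi`_3 * g + phi`_2) * (y - g)
             + (3 * phi`_3 * g ^+ 2 + 2 * phi`_2 * g + phi`_1 - 1)).
Proof.
move=> size_phi; rewrite !horner_coef size_phi !big_ord_recr !big_ord0 /= => fix_g.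
have -> : phi`_0 = g - phi`_1 * g - phi`_2 * g ^+ 2 - phi`_3 * g ^+ 3.
  by rewrite -{1}fix_g; ring.
ring.
Qed.

Lemma filled_julia_inf_real (R : realType) (phi : {poly R}) (x : R) :
  filled_julia_inf phi x%:C <-> exists M, forall n, `|iter n (horner phi) x| <= M.
Proof.
have orbitE n : iter n (fun z => (map_poly (real_complex R) phi).[z]) x%:C
                = (iter n (horner phi) x)%:C.
  by elim: n => //= n ->; rewrite horner_map.
have normE (r : R) : `|r%:C| = `|r|%:C.
  by rewrite normc_def /= expr0n /= addr0 sqrtr_sqr.
by split=> -[M orbit_le]; exists M => n; have := orbit_le n;
  rewrite orbitE normE lecR.
Qed.

Theorem lemma4p9 (R : realType) (phi : {poly R}) (gamma : R) :
  size phi = 4%N -> 0 < lead_coef phi ->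
  phi.[gamma] = gamma -> (forall x : R, phi.[x] = x -> x = gamma) ->
  forall x : R, filled_julia_inf phi (x%:C) <-> x = gamma.
Proof.
move=> size_phi; rewrite lead_coefE size_phi /= => a_gt0 fix_gamma fix_uniq x.
pose b := 3 * phi`_3 * gamma + phi`_2.
pose c := 3 * phi`_3 * gamma ^+ 2 + 2 * phi`_2 * gamma + phi`_1 - 1.
have phiE y : phi.[y] = y + (y - gamma) * (phi`_3 * (y - gamma) ^+ 2 + b * (y - gamma) + c).
  exact: horner_cubic_centered.
have q_root0 t : phi`_3 * t ^+ 2 + b * t + c = 0 -> t = 0.
  move=> qt0; have shiftK : gamma + t - gamma = t by rewrite addrC addKr.
  have := fix_uniq (gamma + t); rewrite phiE shiftK qt0 mulr0 addr0.
  by move=> /(_ erefl) fixed; rewrite -shiftK fixed subrr.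
rewrite filled_julia_inf_real; split => [bounded | ->]; last first.
  by exists `|gamma| => n; rewrite (iter_fix n fix_gamma).
have [/subr0_eq // | t0_neq0] := eqVneq (x - gamma) 0; exfalso; move: bounded.
have [k k_gt0 q_ge] :=
  @quad_bounded_below_beyond _ _ b c a_gt0 q_root0 _ t0_neq0.
apply: (@iter_unbounded_of_uniform_push R (horner phi) gamma x ((x - gamma) ^+ 2 * k)).
  by rewrite mulr_gt0 // exprn_even_gt0.
move=> y beyond; rewrite phiE [y + _]addrC addrK mulrA.
by apply: ler_pM => //; [exact: sqr_ge0 | exact: ltW | exact: q_ge].
Qed.
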